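(* Let $\alpha=(\alpha_1,\dots,\alpha_k)$ be a composition of $r$ and let $m\ge k$. Then in $\mathcal{K}_+$, $$F_\alpha(u_1,u_2-u_1,\dots,u_m-u_{m-1})=\frac{q^{\mathrm{n}(\alpha)}}{[r]_q!}\,u_{[1+m-k,\,r+m-k]},$$ where $\mathrm{n}(\alpha)=\sum_{i=1}^k(i-1)\alpha_i$.
   Context: Let $\mathbf{k}$ be a field of characteristic zero and $q\in\mathbf{k}$ not a nontrivial root of unity; $[r]_q!=\prod_{i=1}^r(1+\dots+q^{i-1})$. The Klyachko algebra $\mathcal{K}$ is the commutative $\mathbf{k}$-algebra generated by $u_i$, $i\in\mathbb{Z}$, with relations $(q+1)u_i^2=qu_iu_{i-1}+u_iu_{i+1}$; $\mathcal{K}_+$ is its quotient by the ideal generated by the $u_i$, $i\le0$. $u_{[a,b]}=u_au_{a+1}\cdots u_b$. For a composition $\alpha$ of $r$ with $\mathrm{Set}(\alpha)=\{\alpha_1,\alpha_1+\alpha_2,\dots,\alpha_1+\dots+\alpha_{k-1}\}$, the fundamental quasisymmetric polynomial is $F_\alpha(x_1,\dots,x_m)=\sum x_{i_1}\cdots x_{i_r}$ over $1\le i_1\le\dots\le i_r\le m$ with $i_j<i_{j+1}$ whenever $j\in\mathrm{Set}(\alpha)$. *)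

From HB Require Import structures.
From mathcomp Require Import all_boot all_order all_algebra.
Set Implicit Arguments. Unset Strict Implicit. Unset Printing Implicit Defensive.
Import Order.TTheory GRing.Theory Num.Theory.
Local Open Scope ring_scope.

Definition qint (k : fieldType) (q : k) (i : nat) : k := \sum_(j < i) q ^+ j.
Definition qfact (k : fieldType) (q : k) (r : nat) : k := \prod_(i < r) qint q i.+1.

Definition is_composition (alpha : seq nat) : bool := all (fun a => 0 < a)%N alpha.

Definition compSet (alpha : seq nat) : seq nat :=
  [seq sumn (take i alpha) | i <- iota 1 (size alpha).-1].

Definition nstat (alpha : seq nat) : nat :=
  \sum_(i < size alpha) (i * nth 0 alpha i)%N.

(* Fundamental quasisymmetric polynomial F_alpha evaluated at x_1,...,x_m
   (x is 1-indexed: variable x_i is x i), r = sumn alpha.  The index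
   sequence i_1 <= ... <= i_r is encoded (0-indexed) by t : {ffun 'I_r -> 'I_m},
   with t j = i_(j+1) - 1. *)
Definition fundQS (R : comNzRingType) (alpha : seq nat) (m : nat) (x : nat -> R) : R :=
  \sum_(t : {ffun 'I_(sumn alpha) -> 'I_m} |
          [forall j : 'I_(sumn alpha), forall j' : 'I_(sumn alpha),
             (nat_of_ord j' == (nat_of_ord j).+1) ==>
               ((t j <= t j')%N && (((nat_of_ord j).+1 \in compSet alpha) ==> (t j < t j')%N))])
     \prod_(j < sumn alpha) x (t j).+1.

Definition klyachko_plus (k : fieldType) (q : k) (A : comAlgType k) (u : int -> A) : Prop :=
  (forall i : int, (q + 1) *: (u i ^+ 2) = q *: (u i * u (i - 1)) + u i * u (i + 1))
  /\ (forall i : int, i <= 0 -> u i = 0).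

Definition uint (R : comNzRingType) (u : int -> R) (a b : nat) : R :=
  \prod_(a <= j < b.+1) u (j%:Z).

Definition udiff (R : comNzRingType) (u : int -> R) (i : nat) : R :=
  if i == 1%N then u 1 else u (i%:Z) - u (i%:Z - 1).

From HB Require Import structures.
From mathcomp Require Import all_boot all_order all_algebra.
From mathcomp Require Import zify.
Import Order.TTheory GRing.Theory Num.Theory.
Set Implicit Arguments. Unset Strict Implicit.
Local Open Scope ring_scope.

(* Write x_i = u_i - u_(i-1).  The statement is strengthened by bounding the
   last (largest) index of the monomials: boundedF sums the monomials of
   F_alpha whose last index is at most b, and we show it equals
   closed_form alpha b = q^n(alpha) / [r]_q! u_[b+1-k, b+r-k]; b = m is the theorem.
   - Combinatorics: splitting off the last index gives
       F_alpha^(<= b+1) = F_alpha^(<= b) + F_alpha'^(<= b') x_(b+1),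
     where alpha' is alpha with its last box removed (boundedF_succ,
     boundedF_drop_box).
   - Algebra: the relation (q+1) u_i^2 = q u_i u_(i-1) + u_i u_(i+1) makes the
     differences of v_i = u_[a+1,a+L] u_(a+i) geometric with ratio q, so
     telescoping gives u_[a+1,a+L] x_(a+n+1) = q^n/[L+1]_q (u_[a+1,a+L+1] - u_[a,a+L])
     (uprod_mul_diff); hence the closed form satisfies the same recursion
     (closed_form_succ), and induction on r and b concludes. *)

Definition admissible (r M : nat) (S : seq nat) (t : {ffun 'I_r -> 'I_M}) : bool :=
  [forall j : 'I_r, forall j' : 'I_r,
     (nat_of_ord j' == (nat_of_ord j).+1) ==>
       ((t j <= t j')%N && (((nat_of_ord j).+1 \in S) ==> (t j < t j')%N))].

Definition last_below (r M : nat) (t : {ffun 'I_r -> 'I_M}) (b : nat) : bool :=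
  [forall j : 'I_r, ((nat_of_ord j).+1 == r) ==> (t j < b)%N].

Definition boundedF (R : comNzRingType) (x : nat -> R) (r : nat) (S : seq nat) (M b : nat) : R :=
  \sum_(t : {ffun 'I_r -> 'I_M} | admissible S t && last_below t b) \prod_(j < r) x (t j).+1.

Lemma fundQS_boundedF (R : comNzRingType) (alpha : seq nat) m (x : nat -> R) :
  fundQS alpha m x = boundedF x (sumn alpha) (compSet alpha) m m.
Proof.
apply: eq_bigl => t; rewrite /admissible /last_below.
suff -> : [forall j : 'I_(sumn alpha), ((nat_of_ord j).+1 == sumn alpha) ==> (t j < m)%N].
  by rewrite andbT.
by apply/forallP => j; rewrite ltn_ord implybT.
Qed.

(* Entry i of t, indexed by a natural number (0 out of range); it lets us talk
   about consecutive entries without casts between ordinal types. *)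
Definition entry (r M : nat) (t : {ffun 'I_r -> 'I_M}) (i : nat) : nat :=
  if insub i is Some j then nat_of_ord (t j) else 0%N.

Lemma entryE r M (t : {ffun 'I_r -> 'I_M}) (j : 'I_r) : entry t j = t j.
Proof. by rewrite /entry valK. Qed.

Lemma admissibleP r M S (t : {ffun 'I_r -> 'I_M}) :
  reflect (forall j, (j.+1 < r)%N ->
             (entry t j <= entry t j.+1)%N /\ (j.+1 \in S -> (entry t j < entry t j.+1)%N))
          (admissible S t).
Proof.
apply: (iffP forallP) => H.
- move=> j hj.
  have /forallP /(_ (Ordinal hj)) := H (Ordinal (ltnW hj)).
  rewrite /= eqxx /= => /andP[h1 h2].
  have e1 := entryE t (Ordinal (ltnW hj)); have e2 := entryE t (Ordinal hj).
  by rewrite /= in e1 e2; rewrite e1 e2; split=> // hS; apply: (implyP h2).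
- move=> j; apply/forallP => j'; apply/implyP => /eqP e.
  have hj : (j.+1 < r)%N by rewrite -e.
  have [h1 h2] := H j hj.
  rewrite -entryE -(entryE t j') e h1 /=; apply/implyP; exact: h2.
Qed.

Lemma last_belowP r M (t : {ffun 'I_r -> 'I_M}) b :
  reflect (forall j, j.+1 = r -> (entry t j < b)%N) (last_below t b).
Proof.
apply: (iffP forallP) => H.
- move=> j hj; have hjr : (j < r)%N by rewrite -hj.
  have := H (Ordinal hjr); rewrite /= hj eqxx /=.
  by have /= -> := entryE t (Ordinal hjr).
- by move=> j; apply/implyP => /eqP e; rewrite -entryE; apply: H.
Qed.

Definition snoc_fun (r M : nat) (t : {ffun 'I_r -> 'I_M}) (c : 'I_M) : {ffun 'I_r.+1 -> 'I_M} :=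
  [ffun i => if unlift ord_max i is Some j then t j else c].

Lemma snoc_fun_lift r M (t : {ffun 'I_r -> 'I_M}) c j : snoc_fun t c (lift ord_max j) = t j.
Proof. by rewrite ffunE liftK. Qed.

Lemma snoc_fun_max r M (t : {ffun 'I_r -> 'I_M}) c : snoc_fun t c ord_max = c.
Proof. by rewrite ffunE unlift_none. Qed.

Lemma entry_snoc r M (t : {ffun 'I_r -> 'I_M}) c i :
  entry (snoc_fun t c) i = if (i < r)%N then entry t i else if i == r then nat_of_ord c else 0%N.
Proof.
case: (ltnP i r) => hi.
  have := entryE (snoc_fun t c) (lift ord_max (Ordinal hi)); rewrite lift_max /= => ->.
  by rewrite snoc_fun_lift; have /= -> := entryE t (Ordinal hi).
case: eqP => [->|ne]; first by have /= -> := entryE (snoc_fun t c) ord_max; rewrite snoc_fun_max.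
by rewrite /entry insubN //; apply/negP => h; apply: ne; move: hi h; clear; lia.
Qed.

Lemma snoc_fun_bij r M : bijective (fun p : 'I_M * {ffun 'I_r -> 'I_M} => snoc_fun p.2 p.1).
Proof.
exists (fun t : {ffun 'I_r.+1 -> 'I_M} => (t ord_max, [ffun j => t (lift ord_max j)])).
- move=> [c t] /=; rewrite snoc_fun_max; congr pair.
  by apply/ffunP => j; rewrite ffunE snoc_fun_lift.
- move=> t /=; apply/ffunP => i; rewrite ffunE /=.
  by case: unliftP => [j ->|->]; first by rewrite ffunE.
Qed.

Lemma admissible_snoc r S M (t : {ffun 'I_r -> 'I_M}) (c : 'I_M) b :
  admissible S (snoc_fun t c) && last_below (snoc_fun t c) b =
  (c < b)%N && (admissible S t && last_below t (if r \in S then nat_of_ord c else (nat_of_ord c).+1)).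
Proof.
apply/idP/idP.
- case/andP => /admissibleP H1 /last_belowP H2.
  have -> /= : (c < b)%N by have := H2 r erefl; rewrite entry_snoc ltnn eqxx.
  apply/andP; split.
    by apply/admissibleP => j hj; have := H1 j (ltnW hj); rewrite !entry_snoc hj (ltnW hj).
  apply/last_belowP => j hj; have jr : (j < r)%N by rewrite -hj.
  have := H1 j; rewrite !entry_snoc jr; subst r; rewrite ltnn eqxx ltnSn.
  by case => // h1 h2; case: (j.+1 \in S) h2 => // h2; apply: h2.
- case/andP => cb /andP[/admissibleP H1 /last_belowP H2]; apply/andP; split.
    apply/admissibleP => j hj; rewrite !entry_snoc.
    case: (ltnP j.+1 r) => hj'; first by rewrite (ltnW hj'); apply: H1.
    have ej : j.+1 = r by move: hj hj'; clear; lia.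
    have := H2 j ej; subst r; rewrite ltnSn eqxx.
    by case: (_ \in S) => h; [split => [|_ //]; exact: ltnW | split => // /negP].
  by apply/last_belowP => j [->]; rewrite entry_snoc ltnn eqxx.
Qed.

Lemma boundedF_last (R : comNzRingType) (x : nat -> R) r S M b :
  boundedF x r.+1 S M b =
  \sum_(c < M | (c < b)%N) boundedF x r S M (if r \in S then nat_of_ord c else (nat_of_ord c).+1) * x c.+1.
Proof.
under eq_bigr => c _ do rewrite /boundedF big_distrl /=.
rewrite pair_big_dep /boundedF (reindex _ (onW_bij _ (@snoc_fun_bij r M))) /=.
apply: eq_big => [[c t]|[c t] _] /=; first by rewrite admissible_snoc.
rewrite big_ord_recr /= snoc_fun_max; congr (_ * _).
apply: eq_bigr => j _; congr (x _.+1).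
have -> : widen_ord (leqnSn r) j = lift ord_max j by apply: ord_inj; rewrite lift_max.
by rewrite snoc_fun_lift.
Qed.

Lemma boundedF_succ (R : comNzRingType) (x : nat -> R) r S M b : (b < M)%N ->
  boundedF x r.+1 S M b.+1 =
  boundedF x r.+1 S M b + boundedF x r S M (if r \in S then b else b.+1) * x b.+1.
Proof.
move=> bM; rewrite !boundedF_last (bigD1 (Ordinal bM)) //= addrC; congr (_ + _).
apply: eq_bigl => c; rewrite ltnS leq_eqVlt -val_eqE /=.
by case: ltngtP.
Qed.

Lemma boundedF_bound0 (R : comNzRingType) (x : nat -> R) r S M : boundedF x r.+1 S M 0 = 0.
Proof. by rewrite boundedF_last big_pred0. Qed.

Lemma boundedF_empty (R : comNzRingType) (x : nat -> R) S M b : boundedF x 0 S M b = 1.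
Proof.
rewrite /boundedF (eq_bigl xpredT); last by move=> t; apply/andP; split; apply/forallP => -[].
under eq_bigr => t _ do rewrite big_ord0.
by rewrite sumr_const card_ffun (card_ord 0) expn0.
Qed.

Lemma boundedF_eq_set (R : comNzRingType) (x : nat -> R) r S S' M b :
  {in gtn r, S =i S'} -> boundedF x r S M b = boundedF x r S' M b.
Proof.
move=> eqS; apply: eq_bigl => t; congr (_ && _).
apply: eq_forallb => j; apply: eq_forallb => j'.
by case: eqP => //= e; rewrite eqS // inE -e.
Qed.

(* [n]_q is nonzero when k has characteristic 0 and q is not a nontrivial
   root of unity: for q = 1 it is n, otherwise (q - 1)[n]_q = q^n - 1. *)
Lemma qint_neq0 (k : fieldType) (q : k) (hchar : [pchar k] =i pred0)
  (hq : forall n : nat, (0 < n)%N -> q ^+ n = 1 -> q = 1) n :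
  qint q n.+1 != 0.
Proof.
have [->|q1] := eqVneq q 1.
  rewrite /qint (eq_bigr (fun _ => 1)) => [|i _]; last by rewrite expr1n.
  by rewrite sumr_const card_ord; have /pcharf0P -> : has_pchar0 k by [].
apply/eqP => qint0; move/eqP: q1; apply.
apply: (hq _ (ltn0Sn n)); apply/eqP.
by rewrite -subr_eq0 subrX1 -/(qint q n.+1) qint0 mulr0.
Qed.

Section GeometricDifferences.
Variables (F : fieldType) (V : lmodType F) (q : F) (v : nat -> V) (L : nat).
Hypothesis v_rec : forall i, (i < L)%N -> (q + 1) *: v i.+1 = q *: v i + v i.+2.

Lemma diff_geometric i : (i <= L)%N -> v i.+1 - v i = q ^+ i *: (v 1 - v 0).
Proof.
elim: i => [|i IH] hi; first by rewrite scale1r.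
have -> : v i.+2 = (q + 1) *: v i.+1 - q *: v i by rewrite v_rec // addrC addKr.
by rewrite scalerDl scale1r addrAC addrK -scalerBr IH ?(ltnW hi) // scalerA exprS.
Qed.

Lemma telescope_geometric : v L.+1 - v 0 = qint q L.+1 *: (v 1 - v 0).
Proof.
rewrite -(telescope_sumr _ (leq0n L.+1)) /qint scaler_suml big_mkord.
by apply: eq_bigr => i _; apply: diff_geometric; rewrite -ltnS.
Qed.

End GeometricDifferences.

Definition uprod (R : comNzRingType) (u : int -> R) (L a : nat) : R :=
  \prod_(i < L) u (a + i)%N.

Lemma uprod_uint (R : comNzRingType) (u : int -> R) L a : uprod u L a.+1 = uint u a.+1 (a + L).
Proof.
rewrite /uint.
have := @big_addn R 1 *%R 0 (a.+1 + L) a.+1 xpredT (fun j => u (Posz j)).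
rewrite add0n => ->; rewrite addKn big_mkord.
by apply: eq_bigr => i _; rewrite addnC.
Qed.

Lemma uprod_at0 (R : comNzRingType) (u : int -> R) (u0 : u 0 = 0) L : uprod u L.+1 0 = 0.
Proof. by rewrite /uprod big_ord_recl /= u0 mul0r. Qed.

Section KlyachkoRelation.
Variables (k : fieldType) (q : k) (A : comAlgType k) (u : int -> A).
Hypothesis u_rel :
  forall i : int, (q + 1) *: (u i ^+ 2) = q *: (u i * u (i - 1)) + u i * u (i + 1).

(* The relation at a+i+1, multiplied by the remaining factors of u_[a+1, a+L]:
   v_i = u_[a+1, a+L] u_(a+i) satisfies the recurrence of geometric differences. *)
Lemma uprod_mul_rec L a i : (i < L)%N ->
  (q + 1) *: (uprod u L a.+1 * u (a + i.+1)%N) =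
  q *: (uprod u L a.+1 * u (a + i)%N) + uprod u L a.+1 * u (a + i.+2)%N.
Proof.
move=> hi; set y : int := (a + i.+1)%N.
set P' := \prod_(j < L | j != Ordinal hi) u (a.+1 + j)%N.
have -> : uprod u L a.+1 = u y * P' by rewrite /uprod (bigD1 (Ordinal hi)) //= addSnnS.
have -> : Posz (a + i)%N = y - 1 by rewrite /y; lia.
have -> : Posz (a + i.+2)%N = y + 1 by rewrite /y; lia.
have E z : u y * P' * z = P' * (u y * z) by rewrite mulrAC mulrC.
by rewrite !E -expr2 scalerAr u_rel mulrDr -scalerAr.
Qed.

Hypothesis qint_nz : forall n, qint q n.+1 != 0.

Lemma uprod_mul_diff L a n : (n <= L)%N ->
  uprod u L a.+1 * (u (a + n.+1)%N - u (a + n)%N) =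
  (q ^+ n / qint q L.+1) *: (uprod u L.+1 a.+1 - uprod u L.+1 a).
Proof.
move=> hn; set v := fun i => uprod u L a.+1 * u (a + i)%N.
have v_rec i : (i < L)%N -> _ := @uprod_mul_rec L a i.
have -> : uprod u L.+1 a.+1 = v L.+1 by rewrite /v /uprod big_ord_recr /= addSnnS.
have -> : uprod u L.+1 a = v 0%N.
  rewrite /v /uprod big_ord_recl /= addn0 mulrC; congr (_ * _).
  by apply: eq_bigr => i _; rewrite addSnnS.
rewrite mulrBr (diff_geometric (v := v) v_rec hn) (telescope_geometric (v := v) v_rec).
by rewrite !scalerA mulrAC -mulrA divff ?mulr1.
Qed.

End KlyachkoRelation.

Lemma nstat_rcons (be : seq nat) s : nstat (rcons be s) = (nstat be + size be * s)%N.
Proof.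
rewrite /nstat size_rcons big_ord_recr /= nth_rcons ltnn eqxx; congr (_ + _)%N.
by apply: eq_bigr => i _; rewrite /= nth_rcons ltn_ord.
Qed.

Lemma size_le_sumn (alpha : seq nat) : is_composition alpha -> (size alpha <= sumn alpha)%N.
Proof. by elim: alpha => //= a s IH /andP[ha /IH]; move: ha; clear; lia. Qed.

Lemma compSet_rcons (be : seq nat) s :
  compSet (rcons be s) = [seq sumn (take i be) | i <- iota 1 (size be)].
Proof.
rewrite /compSet size_rcons /=; apply/eq_in_map => i; rewrite mem_iota => /andP[_ hi].
by rewrite -cats1 takel_cat //; move: hi; clear; lia.
Qed.

Lemma compSet_rcons1 (be : seq nat) : be != [::] ->
  compSet (rcons be 1%N) = rcons (compSet be) (sumn be).
Proof.
case/lastP: be => [//|be z] _.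
rewrite compSet_rcons [compSet (rcons be z)]compSet_rcons size_rcons.
have -> : iota 1 (size be).+1 = rcons (iota 1 (size be)) (size be).+1.
  by rewrite -cats1 -(addn1 (size be)) iotaD addnC.
rewrite map_rcons -(size_rcons be z) take_size; congr rcons.
apply/eq_in_map => i; rewrite mem_iota => /andP[_ hi].
by rewrite -cats1 takel_cat //; move: hi; clear; lia.
Qed.

Lemma pred_sumn_notin_compSet (be : seq nat) s : (1 < s)%N ->
  (sumn be + s).-1 \notin compSet (rcons be s).
Proof.
move=> hs; rewrite compSet_rcons; apply/mapP => -[i _ e].
have := sumn_cat (take i be) (drop i be); rewrite cat_take_drop -e.
by move: hs; clear; lia.
Qed.

Section ClosedForm.
Variables (k : fieldType) (q : k) (A : comAlgType k) (u : int -> A).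
Hypothesis u_rel :
  forall i : int, (q + 1) *: (u i ^+ 2) = q *: (u i * u (i - 1)) + u i * u (i + 1).
Hypothesis u0 : u 0 = 0.
Hypothesis qint_nz : forall n, qint q n.+1 != 0.

(* The claimed value of the truncation of F_alpha at b (k = size alpha):
   q^n(alpha) / [r]_q! u_[b+1-k, b+r-k], which vanishes when b < k
   since then the product contains u_0. *)
Definition closed_form (alpha : seq nat) (b : nat) : A :=
  (q ^+ nstat alpha / qfact q (sumn alpha)) *: uprod u (sumn alpha) (b.+1 - size alpha).

Lemma closed_form_nil b : closed_form [::] b = 1.
Proof. by rewrite /closed_form /nstat /qfact /uprod !big_ord0 expr0 invr1 mulr1 scale1r. Qed.

Lemma udiffS i : udiff u i.+1 = u i.+1 - u i.
Proof. by rewrite /udiff; case: i => [|i] /=; [rewrite u0 subr0 | congr (_ - u _); lia]. Qed.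

(* The closed form obeys the recursion of boundedF_succ, the new term being
   the closed form of alpha without its last box times x_(b+1). *)
Lemma closed_form_succ be s r b :
  (0 < s)%N -> (sumn be + s = r.+1)%N -> (size be <= r)%N ->
  closed_form (rcons be s) b +
    ((q ^+ (nstat (rcons be s) - size be) / qfact q r) *: uprod u r (b.+1 - size be)) * udiff u b.+1 =
  closed_form (rcons be s) b.+1.
Proof.
move=> hs hsum hbr; rewrite /closed_form sumn_rcons hsum size_rcons !subSS udiffS.
have [hb|hb] := ltnP b (size be).
  have r_pos : (0 < r)%N by move: hb hbr; clear; lia.
  have -> : (b - size be = 0)%N by move: hb; clear; lia.
  have -> : (b.+1 - size be = 0)%N by move: hb; clear; lia.
  by rewrite -(prednK r_pos) !uprod_at0 // !scaler0 mul0r addr0.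
set a := (b - size be)%N.
have -> : (b.+1 - size be = a.+1)%N by rewrite /a subSn.
have eb : b = (a + size be)%N by rewrite /a subnK.
rewrite {1 2}eb -addnS -scalerAl (uprod_mul_diff u_rel qint_nz) // scalerA.
have -> : q ^+ (nstat (rcons be s) - size be) / qfact q r * (q ^+ size be / qint q r.+1) =
          q ^+ nstat (rcons be s) / qfact q r.+1.
  rewrite /qfact big_ord_recr /= invfM mulrACA -exprD subnK //.
  by rewrite nstat_rcons; move: hs; clear; nia.
by rewrite scalerBr addrC subrK.
Qed.

(* Removing the last box: the truncation for |alpha| - 1 that appears in
   boundedF_succ is the closed form of alpha minus its last box; this uses the
   statement for all compositions of r - 1 (hypothesis IH). *)
Lemma boundedF_drop_box M r
  (IH : forall al b, sumn al = r -> is_composition al -> (b <= M)%N ->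
        boundedF (udiff u) r (compSet al) M b = closed_form al b)
  be s b : (0 < s)%N -> is_composition be -> (sumn be + s = r.+1)%N -> (b < M)%N ->
  let S := compSet (rcons be s) in
  boundedF (udiff u) r S M (if r \in S then b else b.+1) =
  (q ^+ (nstat (rcons be s) - size be) / qfact q r) *: uprod u r (b.+1 - size be).
Proof.
move=> + hbe + hbM /=; case: s => [//|[|s]] _ hsum.
- have [ebe|hne] := eqVneq be [::].
    subst be; have <- : 0%N = r by move: hsum; rewrite /=; clear; lia.
    by rewrite boundedF_empty /nstat /qfact /uprod !big_ord0 big_ord_recr big_ord0 expr0 invr1 mulr1 scale1r.
  have er : r = sumn be by move: hsum; clear; lia.
  rewrite compSet_rcons1 // mem_rcons in_cons -er eqxx /=.
  rewrite (@boundedF_eq_set _ _ _ _ (compSet be)); last first.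
    by move=> j; rewrite inE => hj; rewrite mem_rcons in_cons ltn_eqF.
  by rewrite IH ?(ltnW hbM) // /closed_form -er nstat_rcons muln1 addnK.
- have er : r = (sumn be + s.+2).-1 by move: hsum; clear; lia.
  have := pred_sumn_notin_compSet be (ltn0Sn s.+1 : (1 < s.+2)%N).
  rewrite -er => /negbTE ->.
  have -> : compSet (rcons be s.+2) = compSet (rcons be s.+1) by rewrite !compSet_rcons.
  have hsum' : sumn (rcons be s.+1) = r by rewrite sumn_rcons; move: hsum; clear; lia.
  rewrite IH //; last by rewrite /is_composition all_rcons.
  rewrite /closed_form hsum' size_rcons subSS !nstat_rcons.
  by congr (q ^+ _ / _ *: _); clear; lia.
Qed.

Lemma boundedF_closed_form M r : forall al b, sumn al = r -> is_composition al -> (b <= M)%N ->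
  boundedF (udiff u) r (compSet al) M b = closed_form al b.
Proof.
elim: r => [|r IH] al b.
  case: al => [|a al] /=; first by rewrite boundedF_empty closed_form_nil.
  by move=> h /andP[ha _]; move: h ha; clear; lia.
case/lastP: al => [//|be s]; rewrite sumn_rcons /is_composition all_rcons => hsum /andP[hs hbe].
have hbr : (size be <= r)%N.
  have := @size_le_sumn (rcons be s); rewrite /is_composition all_rcons hs hbe size_rcons sumn_rcons.
  by move=> /(_ isT); rewrite hsum.
elim: b => [|b IHb] hbM.
  by rewrite boundedF_bound0 /closed_form size_rcons subSS sub0n sumn_rcons hsum uprod_at0 // scaler0.
by rewrite boundedF_succ // IHb ?(ltnW hbM) // (boundedF_drop_box IH) // closed_form_succ.
Qed.

End ClosedForm.

Unset Implicit Arguments. Set Strict Implicit.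

Theorem mainTheorem12 (k : fieldType) (q : k)
  (hchar : [pchar k] =i pred0)
  (hq : forall n : nat, (0 < n)%N -> q ^+ n = 1 -> q = 1)
  (A : comAlgType k) (u : int -> A) (hu : klyachko_plus q u)
  (alpha : seq nat) (m : nat)
  (halpha : is_composition alpha) (hm : (size alpha <= m)%N) :
  fundQS alpha m (udiff u) =
  (q ^+ nstat alpha / qfact q (sumn alpha))
    *: uint u (1 + m - size alpha) (sumn alpha + m - size alpha).
Proof.
have [u_rel u_nonpos] := hu.
have u0 : u 0 = 0 by apply: u_nonpos.
rewrite fundQS_boundedF (boundedF_closed_form u_rel u0 (qint_neq0 hchar hq) erefl halpha (leqnn m)).
rewrite /closed_form subSn // uprod_uint.
by congr (_ *: uint u _ _); move: hm; clear; lia.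
Qed.
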